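(* Let $\mathcal A$ be finite, $r,\hat r:\mathcal A\to[0,1]$, $\eta>0$, $\pi^{\mathrm{ref}}\in\Delta(\mathcal A)$ with $\pi^{\mathrm{ref}}(a)>0$ for all $a$, and $g=r-\hat r$. For $u\in[0,1]$ let $r_u=(1-u)r+u\hat r$ and let $\pi_u$ be the unique maximizer over $\Delta(\mathcal A)$ of $\pi\mapsto\sum_ar_u(a)\pi(a)-\eta^{-1}\mathrm{KL}(\pi^{\mathrm{ref}}\|\pi)$. Define $w_u(a)=\pi_u(a)/\pi^{\mathrm{ref}}(a)$, $Z_u=\sum_a\pi_u(a)^2/\pi^{\mathrm{ref}}(a)$, the probability distribution $\mu_u(a)=\frac{\pi_u(a)^2}{\pi^{\mathrm{ref}}(a)}/Z_u$, and $$F(u)=\frac\eta2\left(\sum_a\frac{\pi_u(a)^2}{\pi^{\mathrm{ref}}(a)}g(a)^2-\frac{\Big(\sum_a\frac{\pi_u(a)^2}{\pi^{\mathrm{ref}}(a)}g(a)\Big)^2}{\sum_a\frac{\pi_u(a)^2}{\pi^{\mathrm{ref}}(a)}}\right).$$ Then for every $u\in(0,1)$, $$F'(u)=-\eta^2Z_u\,\mathbb E_{a\sim\mu_u}\Big[w_u(a)\big(g(a)-\mathbb E_{a'\sim\mu_u}g(a')\big)^3\Big].$$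
   Context: $\mathrm{KL}(P\|Q)=\sum_aP(a)\log(P(a)/Q(a))$. *)

From HB Require Import structures.
From mathcomp Require Import all_boot all_order all_algebra.
From mathcomp Require Import all_classical all_reals all_analysis.
Set Implicit Arguments. Unset Strict Implicit. Unset Printing Implicit Defensive.
Import Order.TTheory GRing.Theory Num.Theory.
Import numFieldNormedType.Exports.
Local Open Scope ring_scope.

Section KLDefs.
Variables (R : realType) (A : finType).

Definition in_simplex (p : A -> R) : Prop :=
  (forall a, 0 <= p a) /\ \sum_(a : A) p a = 1.

Definition KL (P Q : A -> R) : R := \sum_(a : A) P a * ln (P a / Q a).

Definition kl_objective (eta : R) (piref ru pi : A -> R) : R :=
  \sum_(a : A) ru a * pi a - eta^-1 * KL piref pi.

(* Since piref > 0,
   KL(piref || pi) = +oo whenever pi has a zero entry, so the objective is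
   -oo there; hence maximizers have full support and it suffices to compare
   against full-support competitors (the effective domain). *)
Definition is_kl_maximizer (eta : R) (piref ru pi : A -> R) : Prop :=
  [/\ in_simplex pi, (forall a, 0 < pi a) &
      forall q, in_simplex q -> (forall a, 0 < q a) ->
        kl_objective eta piref ru q <= kl_objective eta piref ru pi].

Definition r_interp (r rhat : A -> R) (u : R) : A -> R :=
  fun a => (1 - u) * r a + u * rhat a.

Definition w_of (piref pi : A -> R) (a : A) : R := pi a / piref a.

Definition Z_of (piref pi : A -> R) : R := \sum_(a : A) pi a ^+ 2 / piref a.

Definition mu_of (piref pi : A -> R) (a : A) : R :=
  (pi a ^+ 2 / piref a) / Z_of piref pi.

Definition F_of (eta : R) (piref pi g : A -> R) : R :=
  eta / 2 * (\sum_(a : A) pi a ^+ 2 / piref a * g a ^+ 2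
             - (\sum_(a : A) pi a ^+ 2 / piref a * g a) ^+ 2
               / (\sum_(a : A) pi a ^+ 2 / piref a)).

End KLDefs.

From HB Require Import structures.
From mathcomp Require Import all_boot all_order all_algebra.
From mathcomp Require Import all_classical all_reals all_analysis.
From mathcomp Require Import ring lra.
Import Order.TTheory GRing.Theory Num.Theory.
Import numFieldNormedType.Exports.
Local Open Scope ring_scope.

(* Stationarity of the objective along e_a - e_b shows that
   L(u) = r_u(a) + piref(a) / (eta pi_u(a)) does not depend on a, so
   pi_u(a) = piref(a) / (eta (L(u) - r_u(a))) with L(u) fixed implicitly by
   sum_a pi_u(a) = 1.  Comparing that constraint at z and at u gives
   (L(z) - L(u)) D(z) = (u - z) N(z) for positive weights, with N/D a weighted
   mean of g: hence L is Lipschitz, N/D is continuous, and Caratheodory's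
   criterion yields L' = -E_mu[g], i.e. pi_u' = -eta (pi_u^2 / piref) (g - E_mu[g]).
   Writing F = eta/2 (S_2 - S_1^2 / S_0) with S_k = sum_a pi_u(a)^2 / piref(a) g(a)^k,
   the derivative becomes -eta^2 sum_a (pi_u^2 / piref) w_u (g - m)(g^2 - 2 m g + m^2)
   with m = S_1 / S_0 = E_mu[g], which is the claimed cubic moment. *)

(* Pointwise variants of the library rules ([is_deriveM] etc. are stated for
   [f * g] and [*:]); in this form they unify with lambda terms when chained. *)
Section PointwiseDerivatives.
Context {R : realType}.

Lemma is_derive_sub {f h : R -> R} {x df dh : R} :
  is_derive x 1 f df -> is_derive x 1 h dh ->
  is_derive x 1 (fun y => f y - h y) (df - dh).
Proof. exact: is_deriveB. Qed.

Lemma is_derive_mul {f h : R -> R} {x df dh : R} :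
  is_derive x 1 f df -> is_derive x 1 h dh ->
  is_derive x 1 (fun y => f y * h y) (f x * dh + h x * df).
Proof. exact: is_deriveM. Qed.

Lemma is_derive_inv {f : R -> R} {x df : R} : is_derive x 1 f df -> f x != 0 ->
  is_derive x 1 (fun y => (f y)^-1) (- df / f x ^+ 2).
Proof.
move=> f_df fx_neq0; apply: is_derive_eq (is_deriveV fx_neq0 f_df) _.
by rewrite /GRing.scale /=; ring.
Qed.

Lemma is_derive_ln {f : R -> R} {x df : R} : is_derive x 1 f df -> 0 < f x ->
  is_derive x 1 (fun y => ln (f y)) (df / f x).
Proof.
move=> f_df fx_gt0.
by apply: is_derive_eq (is_derive1_comp (is_derive1_ln fx_gt0) f_df) _; rewrite mulrC.
Qed.

Lemma is_derive_sqr {f : R -> R} {x df : R} : is_derive x 1 f df ->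
  is_derive x 1 (fun y => f y ^+ 2) (2 * f x * df).
Proof.
move=> /(is_deriveX 2) sqr_df; apply: is_derive_eq sqr_df _.
by rewrite /GRing.scale /= expr1.
Qed.

Lemma is_derive_sumr {I : Type} (s : seq I) {F : I -> R -> R} {dF : I -> R} {x : R} :
  (forall i, is_derive x 1 (F i) (dF i)) ->
  is_derive x 1 (fun y => \sum_(i <- s) F i y) (\sum_(i <- s) dF i).
Proof.
move=> F_dF; elim: s => [|i s IHs].
  by under eq_fun do rewrite big_nil; rewrite big_nil; exact: is_derive_cst.
under eq_fun do rewrite big_cons; rewrite big_cons.
exact: is_deriveD.
Qed.

End PointwiseDerivatives.

Lemma sumr_gt0 {R : numDomainType} {I : finType} (i0 : I) {F : I -> R} :
  (forall i, 0 < F i) -> 0 < \sum_i F i.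
Proof.
move=> F_gt0; rewrite (bigD1 i0) //= ltr_pwDl // sumr_ge0 // => i _.
exact: ltW.
Qed.

Lemma normr_sum_weighted_le (R : numDomainType) (I : finType) (w f : I -> R) :
  (forall i, 0 <= w i) -> `|\sum_i w i * f i| <= (\sum_i `|f i|) * \sum_i w i.
Proof.
move=> w_ge0; rewrite mulr_sumr; apply: le_trans (ler_norm_sum _ _ _) _.
apply: ler_sum => i _; rewrite normrM ger0_norm // mulrC ler_wpM2r //.
by rewrite (bigD1 i) //= lerDl sumr_ge0.
Qed.

Lemma sumr_mul_indicator (R : nzSemiRingType) (I : finType) (f : I -> R) (a : I) :
  \sum_c f c * (c == a)%:R = f a.
Proof.
rewrite (bigD1 a) //= eqxx mulr1 big1 ?addr0 // => c /negbTE ->.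
by rewrite mulr0.
Qed.

Lemma in_simplex_support {R : realType} {A : finType} {p : A -> R} :
  in_simplex p -> exists a, 0 < p a.
Proof.
move=> [p_ge0 p_sum1]; have [a /andP[_ pa_gt0]] : exists a, true && (0 < p a).
  apply: psumr_neq0P => [a _|]; first exact: p_ge0.
  by rewrite p_sum1; exact/eqP/oner_neq0.
by exists a.
Qed.

Section KLStationarity.
Variables (R : realType) (A : finType) (eta : R) (piref ru : A -> R).
Hypothesis piref_gt0 : forall a, 0 < piref a.

Lemma is_derive_kl_objective_line (p d : A -> R) (t : R) :
  (forall c, 0 < p c + t * d c) ->
  is_derive t 1 (fun s => kl_objective eta piref ru (fun c => p c + s * d c))
    (\sum_c (ru c + piref c / (eta * (p c + t * d c))) * d c).
Proof.
move=> line_gt0.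
have line c : is_derive t 1 (fun s => p c + s * d c) (d c).
  by apply: is_derive_eq; rewrite /GRing.scale /=; ring.
have log_term c : is_derive t 1 (fun s => piref c * ln (piref c / (p c + s * d c)))
    (- piref c * d c / (p c + t * d c)).
  have q_neq0 := lt0r_neq0 (line_gt0 c); have := piref_gt0 c => piref_c_gt0.
  apply: is_derive_eq (is_derive_mul (is_derive_cst (piref c) t 1) (is_derive_ln
    (is_derive_mul (is_derive_cst (piref c) t 1) (is_derive_inv (line c) q_neq0)) _)) _.
    exact: divr_gt0.
  by rewrite /=; field; rewrite q_neq0 gt_eqF.
rewrite /kl_objective /KL.
apply: is_derive_eq (is_derive_sub
  (is_derive_sumr _ (fun c => is_derive_mul (is_derive_cst (ru c) t 1) (line c)))
  (is_derive_mul (is_derive_cst eta^-1 t 1) (is_derive_sumr _ log_term))) _.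
rewrite mulr0 addr0 mulr_sumr -sumrB; apply: eq_bigr => c _.
have q_neq0 := lt0r_neq0 (line_gt0 c).
(* No hypothesis on eta is needed: for eta = 0 both sides use 0^-1 = 0. *)
rewrite invfM /=; have [->|eta_neq0] := eqVneq eta 0.
  by rewrite invr0; field.
by field; rewrite q_neq0 eta_neq0.
Qed.

Lemma kl_maximizer_stationary (p : A -> R) : is_kl_maximizer eta piref ru p ->
  forall a b, ru a + piref a / (eta * p a) = ru b + piref b / (eta * p b).
Proof.
move=> [[_ p_sum1] p_gt0 p_max] a b; have [<-//|neq_ab] := eqVneq a b.
pose d c : R := (c == a)%:R - (c == b)%:R.
have sum_d f : \sum_c f c * d c = f a - f b.
  by under eq_bigr do rewrite mulrBr; rewrite sumrB !sumr_mul_indicator.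
pose del := Num.min (p a) (p b).
have del_gt0 : 0 < del by rewrite lt_min !p_gt0.
have line_gt0 t : `|t| < del -> forall c, 0 < p c + t * d c.
  rewrite lt_min !ltr_norml => /andP[/andP[? ?] /andP[? ?]] c; rewrite /d.
  have [->|_] := eqVneq c a; first by rewrite (negbTE neq_ab) subr0 mulr1; lra.
  have [->|_] := eqVneq c b; first by rewrite sub0r mulrN1; lra.
  by rewrite subrr mulr0 addr0.
pose phi t := kl_objective eta piref ru (fun c => p c + t * d c).
have p_line0 : (fun c => p c + 0 * d c) = p by apply/funext => c; rewrite mul0r addr0.
have phi_max t : t \in `]- del, del[ -> phi t <= phi 0.
  rewrite in_itv /= -ltr_norml => t_small; rewrite /phi p_line0.
  apply: p_max; last exact: line_gt0.
  split=> [c|]; first exact/ltW/line_gt0.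
  have := sum_d (fun=> 1); under eq_bigr do rewrite mul1r; move=> sum_d1.
  by rewrite big_split /= -mulr_sumr sum_d1 subrr mulr0 addr0.
have phi_crit : is_derive (0 : R) 1 phi 0.
  apply: (derive1_at_max _ _ _ phi_max) => [|t|]; first lra.
    by rewrite in_itv /= -ltr_norml => /line_gt0/is_derive_kl_objective_line[].
  by rewrite in_itv /= oppr_lt0 del_gt0.
have zero_small : `|0 : R| < del by rewrite normr0.
have [_ phi'0] := is_derive_kl_objective_line _ _ _ (line_gt0 0 zero_small).
have [_] := phi_crit; rewrite -/phi phi'0 sum_d !mul0r !addr0.
by move/eqP; rewrite subr_eq0 => /eqP.
Qed.

End KLStationarity.
Arguments kl_maximizer_stationary {R A eta piref ru}.

Section ImplicitMultiplier.
Local Open Scope classical_set_scope.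
Variables (R : realType) (A : finType) (a0 : A) (rho c g : A -> R) (k u : R).
Variable L : R -> R.
Hypothesis rho_gt0 : forall a, 0 < rho a.

Local Notation s z a := (L z - c a + z * g a).
Local Notation w z a := (rho a / (s u a * s z a)).

Hypothesis gap_gt0 : \forall z \near u, forall a, 0 < s z a.
Hypothesis gap_sum : \forall z \near u, \sum_a rho a / s z a = k.

Let weight_gt0 : \forall z \near u, forall a, 0 < w z a.
Proof.
have s_u_gt0 := nbhs_singleton gap_gt0.
near=> z => a; have s_z_gt0 : forall a, 0 < s z a by near: z.
by rewrite divr_gt0 // mulr_gt0.
Unshelve. all: by end_near. Qed.

(* Subtract the constraint at u from the one at z, using
   rho / s u - rho / s z = w z (s z - s u). *)
Lemma multiplier_increment :
  \forall z \near u, (L z - L u) * \sum_a w z a = (u - z) * \sum_a w z a * g a.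
Proof.
have s_u_gt0 := nbhs_singleton gap_gt0.
near=> z; have s_z_gt0 : forall a, 0 < s z a by near: z.
apply/eqP; rewrite -subr_eq0 !mulr_sumr -sumrB.
rewrite (eq_bigr (fun a => rho a / s u a - rho a / s z a)) => [|a _].
  by rewrite sumrB (near gap_sum z) // (nbhs_singleton gap_sum) subrr.
have := s_z_gt0 a; have := s_u_gt0 a => ? ?.
by field; rewrite !gt_eqF.
Unshelve. all: by end_near. Qed.

Lemma multiplier_lipschitz :
  \forall z \near u, `|L z - L u| <= (\sum_a `|g a|) * `|z - u|.
Proof.
near=> z; have w_gt0 : forall a, 0 < w z a by near: z; exact: weight_gt0.
have D_gt0 := sumr_gt0 a0 w_gt0.
rewrite -(ler_pM2r D_gt0) -[X in _ * X <= _](gtr0_norm D_gt0) -normrM.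
rewrite (near multiplier_increment z) // normrM distrC.
rewrite (mulrC (\sum_a `|g a|)) -mulrA ler_wpM2l //.
by apply: normr_sum_weighted_le => a; exact: ltW.
Unshelve. all: by end_near. Qed.

Lemma multiplier_continuous : L z @[z --> u] --> L u.
Proof.
have M_ge0 : 0 <= \sum_a `|g a| by exact: sumr_ge0.
apply/cvgrPdist_le => e e_gt0; pose e' := e / (\sum_a `|g a| + 1).
have e'E : e' * (\sum_a `|g a| + 1) = e by rewrite divfK // gt_eqF // ltr_wpDl.
have e'_gt0 : 0 < e' by rewrite divr_gt0 // ltr_wpDl.
have near_u : \forall z \near u, `|u - z| <= e'.
  exact: (cvgr_dist_le _ _ (@cvg_id _ (nbhs u)) _ e'_gt0).
near=> z; rewrite distrC.
have lip : `|L z - L u| <= (\sum_a `|g a|) * `|z - u|.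
  by near: z; exact: multiplier_lipschitz.
have close : `|z - u| <= e' by rewrite distrC; near: z.
by have := normr_ge0 (z - u); nra.
Unshelve. all: by end_near. Qed.

Lemma is_derive_multiplier :
  is_derive u 1 L (- (\sum_a w u a * g a) / \sum_a w u a).
Proof.
have s_u_gt0 := nbhs_singleton gap_gt0.
have D_u_gt0 := sumr_gt0 a0 (nbhs_singleton weight_gt0).
have s_cvg a : s z a @[z --> u] --> s u a.
  apply: cvgD; last by apply: cvgM; [exact: cvg_id | exact: cvg_cst].
  by apply: cvgB; [exact: multiplier_continuous | exact: cvg_cst].
have w_cvg a : w z a @[z --> u] --> w u a.
  apply: cvgM; first exact: cvg_cst.
  apply: cvgV; first by rewrite mulf_neq0 // gt_eqF.
  by apply: cvgM; [exact: cvg_cst | exact: s_cvg].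
have N_cvg : \sum_a w z a * g a @[z --> u] --> \sum_a w u a * g a.
  apply: cvg_big => // [|a _]; first exact: add_continuous.
  by apply: cvgM; [exact: w_cvg | exact: cvg_cst].
have D_cvg : \sum_a w z a @[z --> u] --> \sum_a w u a.
  by apply: cvg_big => //; exact: add_continuous.
have quot_cvg : - (\sum_a w z a * g a) / \sum_a w z a @[z --> u] -->
    - (\sum_a w u a * g a) / \sum_a w u a.
  by apply: cvgM; [exact: cvgN | apply: cvgV; first rewrite gt_eqF].
apply/is_derive1_caratheodory.
exists (fun z => if z == u then - (\sum_a w u a * g a) / \sum_a w u a
                 else (L z - L u) / (z - u)); split; last by rewrite eqxx.
  move=> z; case: eqP => [->|/eqP z_neq_u]; first by rewrite !subrr mulr0.
  by rewrite divfK // subr_eq0.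
rewrite /prop_for /continuous_at eqxx; apply: cvg_trans quot_cvg.
apply: near_eq_cvg; near=> z; case: eqP => [->//|/eqP z_neq_u].
have D_z_gt0 : 0 < \sum_a w z a.
  by apply: (sumr_gt0 a0); near: z; exact: weight_gt0.
rewrite -[L z - L u](mulfK (lt0r_neq0 D_z_gt0)) (near multiplier_increment z) //.
by field; rewrite subr_eq0 z_neq_u gt_eqF.
Unshelve. all: by end_near. Qed.

End ImplicitMultiplier.
Arguments is_derive_multiplier {R A} a0 {rho c g k u L}.

Section KLMaximizerPath.
Variables (R : realType) (A : finType) (eta u : R) (rho c g : A -> R).
Variable pi : R -> A -> R.
Hypothesis eta_gt0 : 0 < eta.
Hypothesis rho_gt0 : forall a, 0 < rho a.
Hypothesis pi_opt :
  \forall z \near u, is_kl_maximizer eta rho (fun a => c a - z * g a) (pi z).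

Lemma is_derive_kl_maximizer a :
  is_derive u 1 (pi^~ a)
    (- eta * (pi u a ^+ 2 / rho a) * (g a - \sum_b mu_of rho (pi u) b * g b)).
Proof.
have eta_neq0 : eta != 0 by rewrite gt_eqF.
have [pi_u_simplex pi_u_gt0 _] := nbhs_singleton pi_opt.
have [a0 _] := in_simplex_support pi_u_simplex.
(* The Lagrange multiplier of the constraint sum_b pi z b = 1. *)
pose L z := c a0 - z * g a0 + rho a0 / (eta * pi z a0).
have gapE : \forall z \near u, forall b, L z - c b + z * g b = rho b / (eta * pi z b).
  apply: filterS pi_opt => z pi_z_opt b.
  by rewrite /L -(kl_maximizer_stationary rho_gt0 _ pi_z_opt b a0); ring.
have gap_gt0 : \forall z \near u, forall b, 0 < L z - c b + z * g b.
  near=> z => b.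
  have [_ pi_z_gt0 _] : is_kl_maximizer eta rho (fun b => c b - z * g b) (pi z).
    by near: z.
  by rewrite (near gapE z) // divr_gt0 // mulr_gt0.
have gap_sum : \forall z \near u, \sum_b rho b / (L z - c b + z * g b) = eta.
  near=> z.
  have [[_ pi_z_sum1] pi_z_gt0 _] :
      is_kl_maximizer eta rho (fun b => c b - z * g b) (pi z) by near: z.
  rewrite -[RHS]mulr1 -pi_z_sum1 mulr_sumr; apply: eq_bigr => b _.
  have := pi_z_gt0 b; have := rho_gt0 b => ? ?.
  by rewrite (near gapE z) //; field; rewrite eta_neq0 !gt_eqF.
have gap_u_gt0 := nbhs_singleton gap_gt0.
pose s b := L u - c b + u * g b.
have pi_uE b : pi u b = rho b / (eta * s b).
  have := nbhs_singleton gapE b; rewrite -/(s b) => ->.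
  by have := pi_u_gt0 b; have := rho_gt0 b => ? ?; field; rewrite eta_neq0 !gt_eqF.
have W_gt0 : 0 < \sum_b rho b / (s b * s b).
  by apply: (sumr_gt0 a0) => b; rewrite divr_gt0 ?mulr_gt0 ?gap_u_gt0.
have meanE : \sum_b mu_of rho (pi u) b * g b =
    (\sum_b rho b / (s b * s b) * g b) / \sum_b rho b / (s b * s b).
  have qE b : pi u b ^+ 2 / rho b = eta ^- 2 * (rho b / (s b * s b)).
    have := gap_u_gt0 b; have := rho_gt0 b => ? ?.
    by rewrite pi_uE; field; rewrite eta_neq0 !gt_eqF.
  have ZE : Z_of rho (pi u) = eta ^- 2 * \sum_b rho b / (s b * s b).
    by rewrite /Z_of mulr_sumr; apply: eq_bigr => b _; exact: qE.
  rewrite /mu_of ZE mulr_suml; apply: eq_bigr => b _; rewrite qE.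
  by field; rewrite eta_neq0 !gt_eqF ?gap_u_gt0.
have dL := is_derive_multiplier a0 rho_gt0 gap_gt0 gap_sum.
have ds : is_derive u 1 (fun z => L z - c a + z * g a)
    (- (\sum_b rho b / (s b * s b) * g b) / (\sum_b rho b / (s b * s b)) + g a).
  by apply: is_derive_eq; rewrite /GRing.scale /=; ring.
have s_a_neq0 : s a != 0 by rewrite gt_eqF ?gap_u_gt0.
have dp : is_derive u 1 (fun z => rho a / (eta * (L z - c a + z * g a)))
    (- eta * (pi u a ^+ 2 / rho a) * (g a - \sum_b mu_of rho (pi u) b * g b)).
  apply: is_derive_eq (is_derive_mul (is_derive_cst (rho a) u 1)
    (is_derive_inv (is_derive_mul (is_derive_cst eta u 1) ds) _)) _.
    by rewrite mulf_neq0.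
  rewrite meanE pi_uE /= -/(s a); have := rho_gt0 a => ?.
  by field; rewrite s_a_neq0 eta_neq0 !gt_eqF.
apply: near_eq_is_derive dp; near=> z.
have [_ pi_z_gt0 _] : is_kl_maximizer eta rho (fun b => c b - z * g b) (pi z).
  by near: z.
have := pi_z_gt0 a; have := rho_gt0 a => ? ?.
by rewrite (near gapE z) //; field; rewrite eta_neq0 !gt_eqF.
Unshelve. all: by end_near. Qed.

End KLMaximizerPath.
Arguments is_derive_kl_maximizer {R A eta u rho c g pi}.

Section RegularizedVarianceDerivative.
Variables (R : realType) (A : finType) (eta u : R) (piref g : A -> R).
Variable pi : R -> A -> R.

Local Notation m := (\sum_a mu_of piref (pi u) a * g a).
Local Notation q a := (pi u a ^+ 2 / piref a).

Hypothesis Z_neq0 : Z_of piref (pi u) != 0.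
Hypothesis pi_derive :
  forall a, is_derive u 1 (pi^~ a) (- eta * q a * (g a - m)).

Lemma is_derive_weighted_sum (h : A -> R) :
  is_derive u 1 (fun v => \sum_a pi v a ^+ 2 / piref a * h a)
    (- 2 * eta * \sum_a q a * w_of piref (pi u) a * (g a - m) * h a).
Proof.
rewrite mulr_sumr; apply: is_derive_sumr => a.
apply: is_derive_eq (is_derive_mul (is_derive_mul (is_derive_sqr (pi_derive a))
  (is_derive_cst (piref a)^-1 u 1)) (is_derive_cst (h a) u 1)) _.
by rewrite /w_of /=; ring.
Qed.

Lemma is_derive_F_of :
  is_derive u 1 (fun v => F_of eta piref (pi v) g)
    (- eta ^+ 2 * Z_of piref (pi u) *
       \sum_a mu_of piref (pi u) a * (w_of piref (pi u) a * (g a - m) ^+ 3)).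
Proof.
set M := m.
pose T (h : A -> R) := \sum_a q a * w_of piref (pi u) a * (g a - M) * h a.
have dZ : is_derive u 1 (fun v => \sum_a pi v a ^+ 2 / piref a)
    (- 2 * eta * T (fun=> 1)).
  have := is_derive_weighted_sum (fun=> 1).
  by under eq_fun do under eq_bigr do rewrite mulr1.
have S1E : \sum_a q a * g a = M * Z_of piref (pi u).
  by rewrite mulr_suml; apply: eq_bigr => a _; rewrite /mu_of [RHS]mulrAC divfK.
have cubeE : Z_of piref (pi u) *
      \sum_a mu_of piref (pi u) a * (w_of piref (pi u) a * (g a - M) ^+ 3)
    = T (fun a => g a ^+ 2) - 2 * M * T g + M ^+ 2 * T (fun=> 1).
  rewrite /T mulr_sumr [2 * M * _]mulr_sumr [M ^+ 2 * _]mulr_sumr.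
  rewrite -sumrB -big_split.
  apply: eq_bigr => a _; rewrite /mu_of mulrA (mulrC (Z_of _ _)) divfK //=; ring.
rewrite /F_of.
apply: is_derive_eq (is_derive_mul (is_derive_cst (eta / 2) u 1)
  (is_derive_sub (is_derive_weighted_sum (fun a => g a ^+ 2))
     (is_derive_mul (is_derive_sqr (is_derive_weighted_sum g))
        (is_derive_inv dZ Z_neq0)))) _.
rewrite -[RHS]mulrA cubeE /= -/M -/(T g) -/(T (fun a => g a ^+ 2)) S1E.
rewrite -/(Z_of piref (pi u)).
by field.
Qed.

End RegularizedVarianceDerivative.

Theorem lemma5p3 (R : realType) (A : finType) (r rhat : A -> R) (eta : R)
    (piref : A -> R) (pi : R -> A -> R)
    (hr : forall a, 0 <= r a <= 1) (hrhat : forall a, 0 <= rhat a <= 1)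
    (heta : 0 < eta)
    (hpiref : in_simplex piref) (hpiref_pos : forall a, 0 < piref a)
    (hpi : forall u : R, 0 <= u <= 1 ->
             is_kl_maximizer eta piref (r_interp r rhat u) (pi u)) :
  let g := fun a => r a - rhat a in
  forall u : R, 0 < u < 1 ->
    is_derive u (1 : R) (fun v => F_of eta piref (pi v) g)
      (- eta ^+ 2 * Z_of piref (pi u) *
         \sum_(a : A) mu_of piref (pi u) a *
           (w_of piref (pi u) a *
              (g a - \sum_(a' : A) mu_of piref (pi u) a' * g a') ^+ 3)).
Proof.
move=> g u u01.
have pi_opt :
    \forall v \near u, is_kl_maximizer eta piref (fun a => r a - v * g a) (pi v).
  have : u \in `]0, 1[ by rewrite in_itv.
  move/near_in_itvoo; apply: filterS => v; rewrite in_itv /= => /andP[v_gt0 v_lt1].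
  have -> : (fun a => r a - v * g a) = r_interp r rhat v.
    by apply/funext => a; rewrite /r_interp /g; ring.
  by apply: hpi; rewrite !ltW.
have [pi_u_simplex pi_u_gt0 _] := nbhs_singleton pi_opt.
have [a0 _] := in_simplex_support pi_u_simplex.
apply: is_derive_F_of => [|a].
  by rewrite gt_eqF // (sumr_gt0 a0) // => a; rewrite divr_gt0 ?exprn_gt0.
exact: (is_derive_kl_maximizer heta hpiref_pos pi_opt a).
Qed.
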